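(* Let a countable group $G$ act on a set $X$, let $\Phi=(\ell,\phi,\mathcal{Z},\Gamma,\mathcal{H})$ be a chart for $G$, let $\epsilon>0$, let $q$ satisfy $6\epsilon<q<1-\epsilon$, and let $A\subseteq\mathbb{Z}^\ell\times\Gamma$ be a centered rectangle. Let $E$ be a $(\Phi,A,\epsilon)$-rectangular equivalence relation on $X$ and suppose the $E$-class $U$ is $(\Phi,\delta)$-roughly $B$ at $x\in X^{\mathcal{H}}$, where $B$ is a rectangle with $A\sqsubseteq B$, $2^{22\ell}\cdot B\subseteq\mathrm{dom}(\phi)$, and $2\delta\cdot B\sqsubseteq\epsilon\cdot A$. Writing $b=\mathrm{L}(B)$, for each $1\le i\le\ell$, $$\partial_i^\Phi(E,q\cdot A)\cap U\subseteq\phi\big(-b_i\cdot e_i+B^i+2q\cdot A\big)\cdot x\ \cup\ \phi\big(b_i\cdot e_i+B^i+2q\cdot A\big)\cdot x.$$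
   Context: Rectangles: Let $\Gamma$ be a finite additive abelian group with identity $0_\Gamma$ and $\ell\in\mathbb{N}$. Elements $v$ of $\mathbb{R}^\ell\times\Gamma$ have coordinates $v_1,\dots,v_\ell\in\mathbb{R}$, $v_{\ell+1}\in\Gamma$; $\mathbf{0}$ has first $\ell$ coordinates $0$, last $0_\Gamma$; $e_i$ has $i$-th coordinate $1$, other real coordinates $0$, last $0_\Gamma$; $\lambda\cdot v=(\lambda v_1,\dots,\lambda v_\ell,v_{\ell+1})$. $\mathrm{Rec}(a)=\{b\in\mathbb{Z}^\ell\times\Gamma: -|a_i|\le b_i\le|a_i|,\ 1\le i\le\ell\}$. A rectangle is $c+\mathrm{Rec}(a)$ with $c,a\in\mathbb{Z}^\ell\times\Gamma$; uniquely written with center $c\in\mathbb{Z}^\ell\times\{0_\Gamma\}$ and radius vector $\mathrm{L}(A)=a\in\mathbb{N}^\ell\times\{0_\Gamma\}$, entries $\mathrm{L}_i(A)$. Centered means center $\mathbf{0}$. $A\sqsubseteq B$ means $\mathrm{L}_i(A)\le\mathrm{L}_i(B)$ for all $i$. For $\lambda>0$, $\lambda\cdot A=c+\mathrm{Rec}(\lambda\cdot\mathrm{L}(A))$ ($c$ the center of $A$). $A^i=c+\mathrm{Rec}(\mathrm{L}(A)-\mathrm{L}_i(A)\cdot e_i)$. Sums are elementwise. Charts: a chart for $G$ is $\Phi=(\ell,\phi,\mathcal{Z},\Gamma,\mathcal{H})$ with $\mathcal{H}$ a finite collection of pairwise conjugate subgroups of $G$, $\Gamma$ finite abelian, $\mathcal{Z}$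 a centered rectangle with all $\mathrm{L}_i(\mathcal{Z})>0$, $\phi$ an injective map into $G$ with $\mathrm{dom}(\phi)$ a centered rectangle containing $3\cdot\mathcal{Z}$, $\phi(\mathbf{0})=1_G$, and for all $r,s\in\mathrm{dom}(\phi)$, $H\in\mathcal{H}$: $\phi(r)H=\phi(s)H\Rightarrow r=s$; $r+s+\mathcal{Z}\subseteq\mathrm{dom}(\phi)\Rightarrow\exists z\in\mathcal{Z}:\phi(r)\phi(s)H=\phi(r+s+z)H$; $r-s+\mathcal{Z}\subseteq\mathrm{dom}(\phi)\Rightarrow\exists z:\phi(r)\phi(s)^{-1}H=\phi(r-s+z)H$; $-r+s+\mathcal{Z}\subseteq\mathrm{dom}(\phi)\Rightarrow\exists z:\phi(r)^{-1}\phi(s)H=\phi(-r+s+z)H$; $-s+\mathcal{Z}\subseteq\mathrm{dom}(\phi)\Rightarrow\exists z:\phi(s)^{-1}H=\phi(-s+z)H$. $\phi(S)\cdot x=\{\phi(s)\cdot x:s\in S\}$; $X^{\mathcal{H}}=\{x\in X:\mathrm{Stab}(x)\in\mathcal{H}\}$. Rough rectangles: for a rectangle $B$ with $2\cdot B\subseteq\mathrm{dom}(\phi)$, $x\in X^{\mathcal{H}}$, $0<\delta<1$, $R\subseteq X$ is $(\Phi,\delta)$-roughly $B$ at $x$ if $2\cdot\mathcal{Z}\sqsubseteq\delta\cdot B$ and $\phi((1-\delta)\cdot B)\cdot x\subseteq R\subseteq\phi((1+\delta)\cdot B)\cdot x$. Rectangular: for $A$ centered and $0<\epsilon<1$, $E$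 is $(\Phi,A,\epsilon)$-rectangular if every $E$-class not meeting $X^{\mathcal{H}}$ is a singleton and every $E$-class $U$ meeting $X^{\mathcal{H}}$ is $(\Phi,\delta)$-roughly $B$ at some point of $X^{\mathcal{H}}$ for some $\delta>0$ and rectangle $B$ with $A\sqsubseteq B$, $2^{22\ell}\cdot B\subseteq\mathrm{dom}(\phi)$, $2\delta\cdot B\sqsubseteq\epsilon\cdot A$. Boundary: for $A'\subseteq\mathrm{dom}(\phi)$ centered and $1\le i\le\ell$, $\partial_i^\Phi(E,A')$ is the set of $x\in X^{\mathcal{H}}$ with $[\phi(A'^i-\mathrm{L}_i(A')\cdot e_i)\cdot x]_E\cap[\phi(A'^i+\mathrm{L}_i(A')\cdot e_i)\cdot x]_E=\varnothing$, $[Y]_E$ denoting the $E$-saturation. *)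

From HB Require Import structures.
From mathcomp Require Import all_boot all_order all_algebra.
From mathcomp Require Import reals.
From Stdlib Require List.
Set Implicit Arguments. Unset Strict Implicit. Unset Printing Implicit Defensive.
Import Order.TTheory GRing.Theory Num.Theory.
Local Open Scope ring_scope.

Record grp := Grp {
  gcar :> Type;
  gmul : gcar -> gcar -> gcar;
  ginv : gcar -> gcar;
  gone : gcar;
  gmulA : forall a b c, gmul a (gmul b c) = gmul (gmul a b) c;
  gmul1g : forall a, gmul gone a = a;
  gmulg1 : forall a, gmul a gone = a;
  gmulVg : forall a, gmul (ginv a) a = gone;
  gmulgV : forall a, gmul a (ginv a) = gone }.

Definition countable_grp (G : grp) : Prop := exists f : G -> nat, injective f.

Definition is_action (G : grp) (X : Type) (act : G -> X -> X) : Prop :=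
  (forall x, act (gone G) x = x) /\
  (forall g h x, act (gmul g h) x = act g (act h x)).

Definition is_subgroup (G : grp) (H : G -> Prop) : Prop :=
  [/\ H (gone G), (forall a b, H a -> H b -> H (gmul a b))
    & (forall a, H a -> H (ginv a))].

Definition conjugate_subgroups (G : grp) (H1 H2 : G -> Prop) : Prop :=
  exists g : G, forall k, H2 k <-> exists2 h, H1 h & k = gmul g (gmul h (ginv g)).

Definition lcoset_eq (G : grp) (H : G -> Prop) (g g' : G) : Prop :=
  forall k, (exists2 h, H h & k = gmul g h) <-> (exists2 h, H h & k = gmul g' h).

Definition stab (G : grp) (X : Type) (act : G -> X -> X) (x : X) : G -> Prop :=
  fun g => act g x = x.

Definition in_XH (G : grp) (X : Type) (act : G -> X -> X) (Hs : seq (G -> Prop))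
  (x : X) : Prop :=
  exists2 H, List.In H Hs & forall g, stab act x g <-> H g.

Definition pt (l : nat) (Gam : finZmodType) := ({ffun 'I_l -> int} * Gam)%type.

Definition padd l (Gam : finZmodType) (u v : pt l Gam) : pt l Gam :=
  ([ffun i => u.1 i + v.1 i], u.2 + v.2).
Definition popp l (Gam : finZmodType) (u : pt l Gam) : pt l Gam :=
  ([ffun i => - u.1 i], - u.2).
Definition p0 l (Gam : finZmodType) : pt l Gam := ([ffun=> 0], 0).
Definition pe l (Gam : finZmodType) (i : 'I_l) (t : int) : pt l Gam :=
  ([ffun j => if j == i then t else 0], 0).
Arguments pe {l} Gam i t.

Definition incl T (S S' : T -> Prop) : Prop := forall t, S t -> S' t.
Definition psingle T (v : T) : T -> Prop := fun w => w = v.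
Definition sadd l (Gam : finZmodType) (S S' : pt l Gam -> Prop) : pt l Gam -> Prop :=
  fun v => exists u w, [/\ S u, S' w & v = padd u w].

(* ---------- rectangles, in unique form: center in Z^l x {0}, radius in N^l ---------- *)
Record rect (l : nat) := Rect { rc : 'I_l -> int; rr : 'I_l -> nat }.

Definition rset l (Gam : finZmodType) (B : rect l) : pt l Gam -> Prop :=
  fun v => forall i, `|v.1 i - rc B i| <= (rr B i)%:Z.
Arguments rset {l} Gam B.

Definition centered l (B : rect l) : Prop := forall i, rc B i = 0.
Definition sqle l (A B : rect l) : Prop := forall i, (rr A i <= rr B i)%N.
Definition rscale (R : realType) l (lam : R) (B : rect l) : rect l :=
  Rect (rc B) (fun i => Num.truncn (lam * (rr B i)%:R)).
Definition rnscale l (n : nat) (B : rect l) : rect l :=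
  Rect (rc B) (fun i => (n * rr B i)%N).
Definition rface l (B : rect l) (i : 'I_l) : rect l :=
  Rect (rc B) (fun j => if j == i then 0%N else rr B j).

(* phi(S) . x ; phi is only meaningful on its domain D *)
Definition img (G : grp) (X : Type) (act : G -> X -> X) l (Gam : finZmodType)
  (D : rect l) (phi : pt l Gam -> G) (S : pt l Gam -> Prop) (x : X) : X -> Prop :=
  fun y => exists2 s, S s /\ rset Gam D s & y = act (phi s) x.

(* ---------- charts: Phi = (l, phi, Z, Gamma, Hs), dom(phi) = D ---------- *)
Definition is_chart (G : grp) l (Gam : finZmodType) (phi : pt l Gam -> G)
  (D Z : rect l) (Hs : seq (G -> Prop)) : Prop :=
  [/\ (forall H, List.In H Hs -> is_subgroup H),
      (forall H1 H2, List.In H1 Hs -> List.In H2 Hs -> conjugate_subgroups H1 H2),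
      centered Z /\ (forall i, (0 < rr Z i)%N),
      [/\ centered D, incl (rset Gam (rnscale 3 Z)) (rset Gam D),
      (forall r s, rset Gam D r -> rset Gam D s -> phi r = phi s -> r = s) &
      phi (p0 l Gam) = gone G]
    & forall r s H, rset Gam D r -> rset Gam D s -> List.In H Hs ->
      [/\ lcoset_eq H (phi r) (phi s) -> r = s,
          incl (sadd (psingle (padd r s)) (rset Gam Z)) (rset Gam D) ->
            exists2 z, rset Gam Z z &
              lcoset_eq H (gmul (phi r) (phi s)) (phi (padd (padd r s) z)),
          incl (sadd (psingle (padd r (popp s))) (rset Gam Z)) (rset Gam D) ->
            exists2 z, rset Gam Z z &
              lcoset_eq H (gmul (phi r) (ginv (phi s))) (phi (padd (padd r (popp s)) z)),
          incl (sadd (psingle (padd (popp r) s)) (rset Gam Z)) (rset Gam D) ->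
            exists2 z, rset Gam Z z &
              lcoset_eq H (gmul (ginv (phi r)) (phi s)) (phi (padd (padd (popp r) s) z))
        & incl (sadd (psingle (popp s)) (rset Gam Z)) (rset Gam D) ->
            exists2 z, rset Gam Z z &
              lcoset_eq H (ginv (phi s)) (phi (padd (popp s) z))]].

Definition is_equiv (X : Type) (E : X -> X -> Prop) : Prop :=
  [/\ (forall x, E x x), (forall x y, E x y -> E y x)
    & (forall x y z, E x y -> E y z -> E x z)].
Definition is_class (X : Type) (E : X -> X -> Prop) (U : X -> Prop) : Prop :=
  exists y, forall z, U z <-> E y z.
Definition sat (X : Type) (E : X -> X -> Prop) (Y : X -> Prop) : X -> Prop :=
  fun z => exists2 y, Y y & E z y.

Definition roughly (R : realType) (G : grp) (X : Type) (act : G -> X -> X) l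
  (Gam : finZmodType) (phi : pt l Gam -> G) (D Z : rect l) (Hs : seq (G -> Prop))
  (delta : R) (B : rect l) (x : X) (U : X -> Prop) : Prop :=
  [/\ incl (rset Gam (rnscale 2 B)) (rset Gam D),
      in_XH act Hs x /\ (0 < delta /\ delta < 1),
      sqle (rnscale 2 Z) (rscale delta B),
      incl (img act D phi (rset Gam (rscale (1 - delta) B)) x) U
    & incl U (img act D phi (rset Gam (rscale (1 + delta) B)) x)].

Definition rectangular (R : realType) (G : grp) (X : Type) (act : G -> X -> X) l
  (Gam : finZmodType) (phi : pt l Gam -> G) (D Z : rect l) (Hs : seq (G -> Prop))
  (A : rect l) (eps : R) (E : X -> X -> Prop) : Prop :=
  [/\ centered A, 0 < eps /\ eps < 1,
      (forall U, is_class E U -> ~ (exists2 y, U y & in_XH act Hs y) ->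
         exists y, forall z, U z <-> z = y)
    & (forall U, is_class E U -> (exists2 y, U y & in_XH act Hs y) ->
         exists y (delta : R) (B : rect l),
           [/\ in_XH act Hs y /\ 0 < delta, sqle A B,
               incl (rset Gam (rnscale (2 ^ (22 * l)) B)) (rset Gam D),
               sqle (rscale (2 * delta) B) (rscale eps A)
             & roughly act phi D Z Hs delta B y U])].

Definition bdry (G : grp) (X : Type) (act : G -> X -> X) l
  (Gam : finZmodType) (phi : pt l Gam -> G) (D : rect l) (Hs : seq (G -> Prop))
  (E : X -> X -> Prop) (A' : rect l) (i : 'I_l) : X -> Prop :=
  fun x => in_XH act Hs x /\
    ~ (exists z,
         sat E (img act D phi
                  (sadd (psingle (pe Gam i (- (rr A' i)%:Z))) (rset Gam (rface A' i))) x) z /\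
         sat E (img act D phi
                  (sadd (psingle (pe Gam i (rr A' i)%:Z)) (rset Gam (rface A' i))) x) z).

From HB Require Import structures.
From mathcomp Require Import all_boot all_order all_algebra.
From mathcomp Require Import reals.
From mathcomp Require Import zify ring lra.
Import Order.TTheory GRing.Theory Num.Theory.
Set Implicit Arguments. Unset Strict Implicit. Unset Printing Implicit Defensive.
Local Open Scope ring_scope.

(* Write y = phi(s) x with s in (1 + delta) B.  If s lies within 2 q a_i of one
   of the two i-faces of B it splits as +-b_i e_i + (point of B^i) + (point of
   2 q A), the overshoot of (1 + delta) B beyond B being absorbed by 2 q A.
   Otherwise s is deep inside B in direction i: for t = +-floor(q a_i), moving y
   by phi(w), where w_i = t and the other coordinates of w pull s towards the
   centre by at most q A, lands in phi((1 - delta) B) x, hence in U.  The two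
   opposite q A-faces at y then meet the single E-class U, contradicting
   y in the boundary.  All coordinate estimates come from 3 delta b < 2 eps a
   (a consequence of 2 delta B <= eps A and 2 Z <= delta B) and 6 eps < q, which
   leave room for the chart error Z and for rounding. *)

Lemma truncn_bounds (R : realType) (x : R) :
  0 <= x -> (Num.truncn x)%:R <= x /\ x < (Num.truncn x)%:R + 1.
Proof. by move=> x0; rewrite truncn_le x0 natr1 truncnS_gt. Qed.

Lemma leq_of_ltr_addr1 (R : realType) (m n : nat) :
  (m%:R : R) < n%:R + 1 -> (m <= n)%N.
Proof. by rewrite natr1 ltr_nat ltnS. Qed.

Lemma rough_scales (R : realType) (delta eps q : R) (a b z : nat) :
  0 < delta -> 0 < eps -> 6 * eps < q -> q < 1 - eps ->
  (a <= b)%N -> (0 < z)%N -> (2 * z <= Num.truncn (delta * b%:R))%N ->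
  (Num.truncn (2 * delta * b%:R) <= Num.truncn (eps * a%:R))%N ->
  [/\ 2 * z%:R <= delta * b%:R, 3 * (delta * b%:R) < 2 * (eps * a%:R),
      6 * (eps * a%:R) < q * a%:R & q * a%:R <= b%:R].
Proof.
move=> delta_gt0 eps_gt0 eps_lt_q q_lt1 a_le_b z_gt0 z_le delta_le.
have z1 : (1 : R) <= z%:R by rewrite ler1n.
have [dbT _] := truncn_bounds (mulr_ge0 (ltW delta_gt0) (ler0n R b)).
have [eaT _] := truncn_bounds (mulr_ge0 (ltW eps_gt0) (ler0n R a)).
have [_ ddbT] := truncn_bounds (mulr_ge0 (mulr_ge0 (ler0n R 2) (ltW delta_gt0)) (ler0n R b)).
have zP : 2 * z%:R <= delta * b%:R.
  by apply: le_trans dbT; rewrite -natrM ler_nat.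
have dT : (Num.truncn (2 * delta * b%:R))%:R <= (Num.truncn (eps * a%:R))%:R :> R.
  by rewrite ler_nat.
have PE : 3 * (delta * b%:R) < 2 * (eps * a%:R).
  move: ddbT dT eaT; set T2 := Num.truncn (2 * delta * b%:R).
  by rewrite -mulrA; lra.
have a_gt0 : (0 : R) < a%:R.
  rewrite ltr0n lt0n; apply/negP => /eqP a0; move: PE; rewrite a0 mulr0; lra.
have ab : (a%:R : R) <= b%:R by rewrite ler_nat.
split=> //.
- have qe : 0 < q - 6 * eps by rewrite subr_gt0.
  by have := mulr_gt0 qe a_gt0; rewrite mulrBl -mulrA; lra.
- by apply: le_trans (ler_piMl (ltW a_gt0) _) ab; lra.
Qed.

Lemma rough_truncn_budget (R : realType) (delta eps q : R) (a b z : nat) :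
  0 < delta -> delta < 1 -> 0 < eps -> 6 * eps < q -> q < 1 - eps ->
  (a <= b)%N -> (0 < z)%N -> (2 * z <= Num.truncn (delta * b%:R))%N ->
  (Num.truncn (2 * delta * b%:R) <= Num.truncn (eps * a%:R))%N ->
  let Q := Num.truncn (q * a%:R) in let T := Num.truncn (2 * q * a%:R) in
  let Pp := Num.truncn ((1 + delta) * b%:R) in let Pm := Num.truncn ((1 - delta) * b%:R) in
  [/\ (Pp <= b + T)%N, (Pp + z <= Pm + Q)%N, (z <= Pm)%N,
      (Q + z + b <= Pm + T + 1)%N & (Q + Pp + z <= 4 * b)%N].
Proof.
move=> delta_gt0 delta_lt1 eps_gt0 eps_lt_q q_lt1 a_le_b z_gt0 z_le delta_le Q T Pp Pm.
have [zP PE EQ QB] := rough_scales delta_gt0 eps_gt0 eps_lt_q q_lt1 a_le_b z_gt0 z_le delta_le.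
have z1 : (1 : R) <= z%:R by rewrite ler1n.
have q0 : 0 <= q by lra.
have [QT QT'] := truncn_bounds (mulr_ge0 q0 (ler0n R a)); rewrite -/Q in QT QT'.
have [TT TT'] := truncn_bounds (mulr_ge0 (mulr_ge0 (ler0n R 2) q0) (ler0n R a)).
have [PpT PpT'] := truncn_bounds (mulr_ge0 (ltW (ltr_pwDl ltr01 (ltW delta_gt0))) (ler0n R b)).
have d1 : 0 <= 1 - delta by rewrite subr_ge0 ltW.
have [PmT PmT'] := truncn_bounds (mulr_ge0 d1 (ler0n R b)).
rewrite -/T -mulrA in TT TT'; rewrite -/Pp -/Pm mulrDl mulrBl mul1r in PpT PpT' PmT PmT'.
move: zP PE EQ QB QT QT' TT TT' PpT PpT' PmT PmT'.
set P := delta * b%:R; set E := eps * a%:R; set QA := q * a%:R => *.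
split; apply: (@leq_of_ltr_addr1 R); rewrite ?natrD ?natrM; lra.
Qed.

Definition clamp (r v : int) : int := Num.max (- r) (Num.min r v).

Lemma rset_incl_radius l (Gam : finZmodType) (B C : rect l) (k : 'I_l) :
  incl (rset Gam B) (rset Gam C) -> (rr B k <= rr C k)%N.
Proof.
move=> BC.
have hp : rset Gam C ([ffun j => rc B j + (rr B j)%:Z], 0).
  by apply: BC => j; rewrite /= ffunE; lia.
have hm : rset Gam C ([ffun j => rc B j - (rr B j)%:Z], 0).
  by apply: BC => j; rewrite /= ffunE; lia.
by move: (hp k) (hm k); rewrite /= !ffunE; lia.
Qed.

Lemma mem_shifted_face l (Gam : finZmodType) (B C : rect l) (i : 'I_l) (t : int)
    (s : pt l Gam) :
  centered C -> `|s.1 i - rc B i - t| <= (rr C i)%:Z ->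
  (forall k, k != i -> `|s.1 k - rc B k| <= (rr B k + rr C k)%:Z) ->
  sadd (psingle (pe Gam i t)) (sadd (rset Gam (rface B i)) (rset Gam C)) s.
Proof.
move=> C0 si sk.
pose u : pt l Gam := ([ffun k => if k == i then rc B k
                        else rc B k + clamp (rr B k)%:Z (s.1 k - rc B k)], s.2).
pose v : pt l Gam := ([ffun k => if k == i then s.1 k - rc B k - t
                        else s.1 k - rc B k - clamp (rr B k)%:Z (s.1 k - rc B k)], 0).
exists (pe Gam i t), (padd u v); split=> //.
- exists u, v; split=> // k; rewrite /= ffunE ?C0 ?subr0.
  + by case: eqVneq => _ /=; rewrite /clamp; lia.
  + by case: eqVneq => [->|/sk]; rewrite /clamp; lia.
- rewrite /u /v {u v}; case: s si sk => s1 s2 si sk.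
  congr (_, _); last by rewrite /= add0r addr0.
  by apply/ffunP => k; rewrite !ffunE; case: eqVneq => _; ring.
Qed.

Lemma mem_face_translate l (Gam : finZmodType) (A : rect l) (i : 'I_l) (w : pt l Gam) :
  centered A -> w.2 = 0 -> (forall k, k != i -> `|w.1 k| <= (rr A k)%:Z) ->
  sadd (psingle (pe Gam i (w.1 i))) (rset Gam (rface A i)) w.
Proof.
move=> A0 w2 wk.
exists (pe Gam i (w.1 i)), ([ffun k => if k == i then 0 else w.1 k], 0); split=> //.
- move=> k; rewrite /= ffunE A0 subr0.
  by case: eqVneq => [_|/wk]; rewrite ?normr0.
- case: w w2 wk => w1 w2 /= -> _; congr (_, _); last by rewrite addr0.
  by apply/ffunP => k; rewrite !ffunE; case: eqVneq => [->|]; rewrite ?addr0 ?add0r.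
Qed.

Lemma chart_act_mul (G : grp) (X : Type) (act : G -> X -> X) l (Gam : finZmodType)
    (phi : pt l Gam -> G) (D Z : rect l) (Hs : seq (G -> Prop)) (x : X) (r s : pt l Gam) :
  is_action act -> is_chart phi D Z Hs -> in_XH act Hs x ->
  rset Gam D r -> rset Gam D s ->
  incl (sadd (psingle (padd r s)) (rset Gam Z)) (rset Gam D) ->
  exists2 z, rset Gam Z z &
    act (phi r) (act (phi s) x) = act (phi (padd (padd r s) z)) x.
Proof.
move=> [_ actM] [Hsub _ _ _ chartM] [H Hin Hstab] rD sD rsZ.
have [_ mulP _ _ _] := chartM r s H rD sD Hin.
have [z zZ coset] := mulP rsZ.
exists z => //.
have [H1 _ _] := Hsub H Hin.
rewrite -actM.
have [h Hh ->] := (coset (gmul (phi r) (phi s))).1 (ex_intro2 _ _ _ H1 (esym (gmulg1 _))).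
by rewrite actM; congr act; apply/Hstab.
Qed.

Lemma bdry_faces_not_equiv (G : grp) (X : Type) (act : G -> X -> X) l
    (Gam : finZmodType) (phi : pt l Gam -> G) (D : rect l) (Hs : seq (G -> Prop))
    (E : X -> X -> Prop) (A' : rect l) (i : 'I_l) (y p1 p2 : X) :
  is_equiv E -> bdry act phi D Hs E A' i y ->
  img act D phi (sadd (psingle (pe Gam i (- (rr A' i)%:Z))) (rset Gam (rface A' i))) y p1 ->
  img act D phi (sadd (psingle (pe Gam i (rr A' i)%:Z)) (rset Gam (rface A' i))) y p2 ->
  ~ E p1 p2.
Proof.
move=> [Erefl _ _] [_ nboth] p1m p2m p12.
by apply: nboth; exists p1; split; [exists p1 | exists p2].
Qed.

Section RoughClassBoundary.
Variables (R : realType) (G : grp) (X : Type) (act : G -> X -> X) (l : nat)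
  (Gam : finZmodType) (phi : pt l Gam -> G) (D Z : rect l) (Hs : seq (G -> Prop))
  (eps q delta : R) (A B : rect l) (x : X) (U : X -> Prop).
Hypotheses (act_is_action : is_action act) (phi_chart : is_chart phi D Z Hs)
  (eps_gt0 : 0 < eps) (eps_lt_q : 6 * eps < q) (q_lt1 : q < 1 - eps)
  (A_centered : centered A) (U_rough : roughly act phi D Z Hs delta B x U)
  (A_le_B : sqle A B) (B_in_D : incl (rset Gam (rnscale (2 ^ (22 * l)) B)) (rset Gam D))
  (delta_B_le_eps_A : sqle (rscale (2 * delta) B) (rscale eps A)).

(* Stated through [rscale], so that after [/=] the truncations are syntactically
   those coming from [roughly], as [lia] needs. *)
Lemma coord_budget (k : 'I_l) :
  let Q := rr (rscale q A) k in let T := rr (rscale (2 * q) A) k in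
  let Pp := rr (rscale (1 + delta) B) k in let Pm := rr (rscale (1 - delta) B) k in
  [/\ (Pp <= rr B k + T)%N, (Pp + rr Z k <= Pm + Q)%N, (rr Z k <= Pm)%N,
      (Q + rr Z k + rr B k <= Pm + T + 1)%N & (Q + Pp + rr Z k <= 4 * rr B k)%N].
Proof.
have [_ [_ [d0 d1]] Z_le_B _ _] := U_rough.
have [_ _ [_ Z_gt0] _ _] := phi_chart.
exact: rough_truncn_budget d0 d1 eps_gt0 eps_lt_q q_lt1 (A_le_B k) (Z_gt0 k)
  (Z_le_B k) (delta_B_le_eps_A k).
Qed.

Lemma interior_face_point (i : 'I_l) (s : pt l Gam) (t : int) :
  rset Gam (rscale (1 + delta) B) s -> rset Gam D s ->
  `|s.1 i - rc B i| + (rr (rscale (2 * q) A) i)%:Z + 1 <= (rr B i)%:Z ->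
  `|t| <= (rr (rscale q A) i)%:Z ->
  exists2 p, U p & img act D phi
    (sadd (psingle (pe Gam i t)) (rset Gam (rface (rscale q A) i))) (act (phi s) x) p.
Proof.
move=> sB sD si ti.
have [_ [x_XH _] _ inU _] := U_rough.
have [_ _ [Z0 _] [D0 _ _ _] _] := phi_chart.
have scale4 : (2 ^ 2 <= 2 ^ (22 * l))%N by rewrite leq_exp2l //; move: (ltn_ord i); lia.
have wide k : (4 * rr B k <= 2 ^ (22 * l) * rr B k)%N := leq_mul scale4 (leqnn _).
have wideD k : (4 * rr B k <= rr D k)%N := leq_trans (wide k) (rset_incl_radius k B_in_D).
have [w [wi w2 wk]] : exists w : pt l Gam, [/\ w.1 i = t, w.2 = 0 &
    forall k, k != i -> w.1 k = - clamp (rr (rscale q A) k)%:Z (s.1 k - rc B k)].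
  exists ([ffun k => if k == i then t
    else - clamp (rr (rscale q A) k)%:Z (s.1 k - rc B k)], 0).
  by split=> [|//|k /negbTE ki]; rewrite /= ffunE ?eqxx ?ki.
have wQ k : `|w.1 k| <= (rr (rscale q A) k)%:Z.
  by case: (eqVneq k i) => [->|/wk->]; rewrite ?wi // /clamp; lia.
have wD : rset Gam D w.
  move=> k; rewrite D0.
  by move: (wQ k) (wideD k) (coord_budget k) => /= ? ? [_ _ _ _ ?]; lia.
have wsD : incl (sadd (psingle (padd w s)) (rset Gam Z)) (rset Gam D).
  move=> _ [_ [z [-> zZ ->]]]; apply: B_in_D => k /=; rewrite !ffunE.
  move: (wQ k) (sB k) (zZ k) (wide k) (coord_budget k); rewrite Z0 /=.
  by move=> ? ? ? ? [_ _ _ _ ?]; lia.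
have [z zZ ws] := chart_act_mul act_is_action phi_chart x_XH wD sD wsD.
exists (act (phi w) (act (phi s) x)); last first.
  exists w; last by [].
  by split=> //; rewrite -wi; apply: mem_face_translate => // k _; apply: wQ.
apply: inU; exists (padd (padd w s) z) => //; split; last first.
  by apply: wsD; exists (padd w s), z.
move=> k /=; rewrite !ffunE.
move: (sB k) (zZ k) (coord_budget k) si ti; rewrite Z0.
by case: (eqVneq k i) => [->|/wk->]; rewrite ?wi /clamp /= => ? ? [? ? ? ? _] ? ?; lia.
Qed.

Lemma rough_point_near_face_or_deep (i : 'I_l) (s : pt l Gam) :
  rset Gam (rscale (1 + delta) B) s ->
  let F := sadd (rset Gam (rface B i)) (rset Gam (rscale (2 * q) A)) in
  [\/ sadd (psingle (pe Gam i (- (rr B i)%:Z))) F s,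
      sadd (psingle (pe Gam i (rr B i)%:Z)) F s
    | `|s.1 i - rc B i| + (rr (rscale (2 * q) A) i)%:Z + 1 <= (rr B i)%:Z].
Proof.
move=> sB F.
have near_face t : `|s.1 i - rc B i - t| <= (rr (rscale (2 * q) A) i)%:Z ->
    sadd (psingle (pe Gam i t)) F s.
  move=> si; apply: mem_shifted_face si _ => [|k _]; first exact: A_centered.
  by move: (sB k) (coord_budget k) => /= ? [? _ _ _ _]; lia.
move: (sB i) (coord_budget i) => /= sBi [b1 _ _ _ _].
have [hi|lo] := lerP ((rr B i)%:Z - (rr (rscale (2 * q) A) i)%:Z) (s.1 i - rc B i).
  by apply: Or32; apply: near_face; move: hi => /=; lia.
have [hi|lo'] := lerP (s.1 i - rc B i) ((rr (rscale (2 * q) A) i)%:Z - (rr B i)%:Z).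
  by apply: Or31; apply: near_face; move: hi => /=; lia.
by apply: Or33; move: lo lo' => /=; lia.
Qed.

End RoughClassBoundary.

Theorem lemma6p3 (R : realType) (G : grp) (X : Type) (act : G -> X -> X)
  (l : nat) (Gam : finZmodType) (phi : pt l Gam -> G) (D Z : rect l)
  (Hs : seq (G -> Prop)) (eps q : R) (A : rect l) (E : X -> X -> Prop)
  (U : X -> Prop) (delta : R) (B : rect l) (x : X) :
  countable_grp G -> is_action act -> is_chart phi D Z Hs ->
  0 < eps -> 6 * eps < q -> q < 1 - eps -> centered A ->
  is_equiv E -> rectangular act phi D Z Hs A eps E ->
  is_class E U -> roughly act phi D Z Hs delta B x U ->
  sqle A B -> incl (rset Gam (rnscale (2 ^ (22 * l)) B)) (rset Gam D) ->
  sqle (rscale (2 * delta) B) (rscale eps A) ->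
  forall (i : 'I_l) (y : X),
    bdry act phi D Hs E (rscale q A) i y -> U y ->
    img act D phi
      (sadd (psingle (pe Gam i (- (rr B i)%:Z)))
            (sadd (rset Gam (rface B i)) (rset Gam (rscale (2 * q) A)))) x y \/
    img act D phi
      (sadd (psingle (pe Gam i (rr B i)%:Z))
            (sadd (rset Gam (rface B i)) (rset Gam (rscale (2 * q) A)))) x y.
Proof.
move=> _ act_is_action phi_chart eps_gt0 eps_lt_q q_lt1 A_centered E_equiv _
  [y0 U_class] U_rough A_le_B B_in_D dB i y y_bdry yU.
have [_ _ _ _ /(_ y yU) [s [sB sD] ys]] := U_rough.
have [near|near|deep] := rough_point_near_face_or_deep phi_chart eps_gt0 eps_lt_q
  q_lt1 A_centered U_rough A_le_B dB i sB.
- by left; exists s.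
- by right; exists s.
exfalso.
have point t : `|t| <= (rr (rscale q A) i)%:Z -> exists2 p, U p &
    img act D phi (sadd (psingle (pe Gam i t)) (rset Gam (rface (rscale q A) i))) y p.
  by rewrite ys; exact: interior_face_point act_is_action phi_chart eps_gt0 eps_lt_q
    q_lt1 A_centered U_rough A_le_B B_in_D dB i s t sB sD deep.
have /point [p1 Up1 p1_face] : `|- (rr (rscale q A) i)%:Z| <= (rr (rscale q A) i)%:Z.
  by rewrite normrN.
have /point [p2 Up2 p2_face] : `|(rr (rscale q A) i)%:Z| <= (rr (rscale q A) i)%:Z by [].
have [_ E_sym E_trans] := E_equiv.
apply: (bdry_faces_not_equiv E_equiv y_bdry p1_face p2_face).
by apply: (E_trans _ y0); [apply: E_sym; apply/U_class | apply/U_class].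
Qed.
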